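(* For every simple game $v$ on $n\ge 2$ players and every player $i$ that is not a dictator in $v$, we have $\mathrm{Js}_i(v)\le\frac{2^{n-1}-1}{2^{n-1}}$.
   Context: A simple game on $N=\{1,\dots,n\}$ is a surjective, monotone map $v\colon 2^N\to\{0,1\}$. Player $j$ is a null player if $v(S)=v(S\cup\{j\})$ for all $S\subseteq N\setminus\{j\}$; player $i$ is a dictator if $v(\{i\})=1$ and all other players are null players. Johnston index: for a winning coalition $T$ (i.e. $v(T)=1$), a player $j\in T$ is critical in $T$ if $v(T\setminus\{j\})=0$; let $\psi'_j(v)=\sum_{T\ni j,\ j\text{ critical in }T}\frac{1}{c(T)}$, where $c(T)$ is the number of players critical in $T$; then $\mathrm{Js}_i(v)=\psi'_i(v)/\sum_{j\in N}\psi'_j(v)$. *)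

(* Players are 'I_n, coalitions are {set 'I_n},
   a game is v : {set 'I_n} -> bool (true = 1 = winning). *)
From HB Require Import structures.
From mathcomp Require Import all_boot all_order all_algebra.
Set Implicit Arguments. Unset Strict Implicit. Unset Printing Implicit Defensive.
Import Order.TTheory GRing.Theory Num.Theory.

Section Games.
Variable n : nat.
Implicit Types (v : {set 'I_n} -> bool) (S T : {set 'I_n}) (i j : 'I_n).

Definition monotone_game v : Prop :=
  forall S T, S \subset T -> v S -> v T.

Definition surjective_game v : Prop :=
  forall b : bool, exists S, v S = b.

Definition simple_game v : Prop := monotone_game v /\ surjective_game v.

Definition null_player v j : Prop :=
  forall S, j \notin S -> v S = v (j |: S).

Definition dictator v i : Prop :=
  v [set i] /\ forall j, j != i -> null_player v j.

Definition critical v T j : bool := [&& v T, j \in T & ~~ v (T :\ j)].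

Definition ncrit v T : nat := #|[set j | critical v T j]|.

Local Open Scope ring_scope.

Definition psi' v j : rat :=
  \sum_(T : {set 'I_n} | critical v T j) (ncrit v T)%:R^-1.

Definition johnston v i : rat := psi' v i / \sum_(j : 'I_n) psi' v j.

End Games.

(* Write [johnston v i] as [psi' v i / (psi' v i + O)], where [O] is the mass the
   other players collect from all winning coalitions; it suffices to show
   [psi' v i <= (2^(n-1) - 1) * O].  If every coalition in which [i] is critical
   has a second critical player, this holds coalition by coalition.  Otherwise
   [i] is the sole critical player of some winning [T0].  Then [i] is not
   critical in some coalition containing it, so [psi' v i <= 2^(n-1) - 1], and
   [O >= 1]: either a minimal winning coalition avoids [i] and gives all its
   mass to the others, or all winning coalitions contain [i], so [{i}] loses
   ([i] is no dictator) and two distinct minimal winning coalitions, inside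
   [T0] and [T0 \ {j}] for some [j <> i], each give at least half. *)
From HB Require Import structures.
From mathcomp Require Import all_boot all_order all_algebra.
From mathcomp Require Import lra.
Import Order.TTheory GRing.Theory Num.Theory.
Local Open Scope ring_scope.

Lemma ratio_le_of_le_mul (R : realFieldType) (p q k : R) :
  0 <= p -> 0 <= q -> 0 <= k -> p <= k * q -> p / (p + q) <= k / (k + 1).
Proof.
move=> p0 q0 k0 pkq; have k1 : 0 < k + 1 by lra.
have [pq0|/negPn/eqP->] := boolP (p + q != 0); last first.
  by rewrite invr0 mulr0 divr_ge0 // ltW.
have pq_gt0 : 0 < p + q by rewrite lt_def pq0 addr_ge0.
by rewrite ler_pdivrMr // mulrAC ler_pdivlMr //; nra.
Qed.

Lemma card_sets_containing (T : finType) (x : T) :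
  #|[set A : {set T} | x \in A]| = (2 ^ #|T|.-1)%N.
Proof.
rewrite -(card_in_imset (f := fun A => A :\ x)); last first.
  by move=> A B; rewrite !inE => xA xB eqAB; rewrite -(setD1K xA) -(setD1K xB) eqAB.
rewrite -(cardsC1 x) -card_powerset; apply: eq_card => B.
rewrite inE; apply/imsetP/subsetP => [[A _ ->] y|sBx].
  by rewrite !inE => /andP[].
exists (x |: B); first by rewrite inE setU11.
apply/setP => y; rewrite !inE; case: eqP => // -> /=.
by apply/negbTE/negP => /sBx; rewrite !inE eqxx.
Qed.

Section SimpleGames.

Variables (n : nat) (v : {set 'I_n} -> bool) (i : 'I_n).
Implicit Types (S T M : {set 'I_n}) (j : 'I_n).

Lemma simple_game_set0 : simple_game v -> v set0 = false.
Proof.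
case=> mono surj; have [S vS] := surj false.
by apply/negbTE/negP => /(mono _ _ (sub0set S)); rewrite vS.
Qed.

Lemma critical_minset M : minset v M -> [set j | critical v M j] = M.
Proof.
move=> /minsetP[vM minM]; apply/setP => j; rewrite inE /critical vM /=.
have [jM|//] := boolP (j \in M); apply/negP => /minM/(_ (subsetDl _ _)) eqM.
by move: jM; rewrite -eqM !inE eqxx.
Qed.

Lemma ncrit_minset M : minset v M -> ncrit v M = #|M|.
Proof. by move=> /critical_minset; rewrite /ncrit => ->. Qed.

(* Each winning coalition distributes mass 1 equally among its critical players;
   this is the part of it received by the players other than [i]. *)
Definition share_others T : rat :=
  #|[set j | critical v T j] :\ i|%:R / (ncrit v T)%:R.

Lemma share_others_ge0 T : 0 <= share_others T.
Proof. by rewrite divr_ge0 ?ler0n. Qed.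

Lemma sum_psi'_others :
  \sum_(j | j != i) psi' v j = \sum_T share_others T.
Proof.
rewrite /psi'; under eq_bigr do rewrite big_mkcond.
rewrite exchange_big /=; apply: eq_bigr => T _; rewrite -big_mkcondr /=.
rewrite (eq_bigl (mem ([set j | critical v T j] :\ i))); last first.
  by move=> j; rewrite !inE andbC.
by rewrite sumr_const /share_others mulr_natl.
Qed.

Lemma share_others_minset M : minset v M ->
  share_others M = #|M :\ i|%:R / #|M|%:R.
Proof. by move=> minM; rewrite /share_others ncrit_minset // critical_minset. Qed.

Lemma share_others_minset_notin M :
  v set0 = false -> minset v M -> i \notin M -> share_others M = 1.
Proof.
move=> v0 minM iM; rewrite share_others_minset //.
have := cardsD1 i M; rewrite (negbTE iM) add0n => <-; rewrite divff //.
by rewrite pnatr_eq0 cards_eq0; apply: contraTneq (minsetp minM) => ->; rewrite v0.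
Qed.

Lemma share_others_minset_in M :
  minset v M -> i \in M -> M != [set i] -> 1 / 2 <= share_others M.
Proof.
move=> minM iM Mi; rewrite share_others_minset //.
have cardM := cardsD1 i M; rewrite iM add1n in cardM.
have others_gt0 : (0 < #|M :\ i|)%N.
  rewrite card_gt0; apply: contraNneq Mi => Mi0.
  by rewrite -(setD1K iM) Mi0 setU0.
rewrite cardM ler_pdivlMr ?ltr0n // -[#|M :\ i|.+1]addn1 natrD.
have : (1 <= #|M :\ i|%:R :> rat) by rewrite ler1n.
move: (#|M :\ i|%:R : rat) => k; lra.
Qed.

Lemma psi'_le_card_critical : psi' v i <= #|[set T | critical v T i]|%:R.
Proof.
rewrite /psi' -sum1_card natr_sum.
rewrite [X in _ <= X](eq_bigl (fun T => critical v T i)); last by move=> T; rewrite inE.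
apply: ler_sum => T cT.
have ncrit_gt0 : (0 < ncrit v T)%N by apply/card_gt0P; exists i; rewrite inE.
by rewrite invf_le1 ?ler1n ?ltr0n.
Qed.

Lemma psi'_le_of_noncritical T0 :
  i \in T0 -> ~~ critical v T0 i -> psi' v i <= (2 ^ n.-1 - 1)%N%:R.
Proof.
move=> iT0 ncT0; apply: le_trans psi'_le_card_critical _; rewrite ler_nat.
have sub : [set T | critical v T i] \subset [set T : {set 'I_n} | i \in T] :\ T0.
  apply/subsetP => T; rewrite !inE => cT; have /and3P[_ iT _] := cT.
  by rewrite iT andbT; apply: contraTneq cT => ->.
apply: leq_trans (subset_leq_card sub) _.
have := cardsD1 T0 [set T : {set 'I_n} | i \in T].
by rewrite inE iT0 card_sets_containing card_ord add1n => ->; rewrite subn1.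
Qed.

Lemma psi'_le_share_others :
  (forall T, critical v T i -> (2 <= ncrit v T)%N) ->
  psi' v i <= \sum_T share_others T.
Proof.
move=> crit2; rewrite /psi' big_mkcond; apply: ler_sum => T _.
case: ifP => [cT|_]; last exact: share_others_ge0.
rewrite /share_others ler_peMl ?invr_ge0 ?ler0n //.
have := cardsD1 i [set j | critical v T j]; rewrite inE cT add1n => cardT.
by rewrite ler1n -ltnS -cardT crit2.
Qed.

Section Monotone.

Hypotheses (mono : monotone_game v) (v0 : v set0 = false).

Lemma share_others_ge1_of_winning_notin W :
  v W -> i \notin W -> 1 <= \sum_T share_others T.
Proof.
move=> vW iW; have [M minM sMW] := minset_exists vW.
rewrite (bigD1 M) //= -[1]addr0 lerD ?sumr_ge0 //= => [|*]; last exact: share_others_ge0.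
by rewrite share_others_minset_notin //; apply: contra iW; apply: subsetP.
Qed.

Lemma singleton_losing_of_not_dictator :
  ~ dictator v i -> (forall T, v T -> i \in T) -> v [set i] = false.
Proof.
move=> nd allI; apply/negbTE/negP => vi; apply: nd; split=> // j ji S jS.
have [vS|vS] := boolP (v S); first by rewrite (mono _ _ _ vS) // subsetUr.
apply/esym/negbTE; apply: contra vS => /allI; rewrite in_setU1 eq_sym (negbTE ji) /=.
by move=> iS; rewrite (mono _ _ _ vi) ?sub1set.
Qed.

Lemma share_others_ge1_of_sole_critical T0 :
  (forall T, v T -> i \in T) -> v [set i] = false ->
  critical v T0 i -> (ncrit v T0 <= 1)%N -> 1 <= \sum_T share_others T.
Proof.
move=> allI vi cT0 ncrit1; have /and3P[vT0 _ _] := cT0.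
have minset_contains_i M : minset v M -> (i \in M) * (M != [set i]).
  move=> /minsetp vM; split; first exact: allI.
  by apply: contraTneq vM => ->; rewrite vi.
have [M1 minM1 sM1] := minset_exists vT0.
have [j jM1] : exists j, j \in M1 :\ i.
  apply/set0Pn; apply: contraNneq (minset_contains_i _ minM1).2 => M1i0.
  by rewrite -(setD1K (minset_contains_i _ minM1).1) M1i0 setU0.
move: jM1; rewrite in_setD1 => /andP[ji jM1]; have jT0 := subsetP sM1 _ jM1.
have vT0j : v (T0 :\ j).
  apply: contraTT ncrit1 => losing; rewrite -ltnNge.
  have <- : #|[set i; j]| = 2%N by rewrite cards2 eq_sym ji.
  rewrite /ncrit; apply: subset_leq_card; apply/subsetP => x; rewrite !inE.
  by case/orP=> /eqP ->; rewrite // /critical vT0 jT0.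
have [M2 minM2 sM2] := minset_exists vT0j.
have M21 : M2 != M1.
  by apply: contraTneq jM1 => <-; apply/negP => /(subsetP sM2); rewrite in_setD1 eqxx.
rewrite (bigD1 M1) //= (bigD1 M2) //= addrA.
rewrite -[1]addr0 lerD ?sumr_ge0 //; last by move=> *; apply: share_others_ge0.
have half_share M : minset v M -> 1 / 2 <= share_others M.
  move=> minM; have [iM Mi] := minset_contains_i M minM.
  exact: share_others_minset_in minM iM Mi.
by have := half_share _ minM1; have := half_share _ minM2; lra.
Qed.

End Monotone.

Lemma psi'_le_share_others_scaled :
  (2 <= n)%N -> simple_game v -> ~ dictator v i ->
  psi' v i <= (2 ^ n.-1 - 1)%N%:R * \sum_T share_others T.
Proof.
move=> n2 sg nd; have [mono _] := sg; have v0 := simple_game_set0 sg.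
have K1 : 1 <= (2 ^ n.-1 - 1)%N%:R :> rat.
  by rewrite ler1n subn_gt0 -{1}(expn0 2) ltn_exp2l //; case: n n2 => [|[|m]].
have others_ge0 : 0 <= \sum_T share_others T.
  by apply: sumr_ge0 => *; apply: share_others_ge0.
have [/forallP crit2|/forallPn[T0]] :=
    boolP [forall T, critical v T i ==> (1 < ncrit v T)%N].
  apply: le_trans (ler_peMl others_ge0 K1); apply: psi'_le_share_others => T cT.
  by move: (crit2 T); rewrite cT.
rewrite negb_imply -leqNgt => /andP[cT0 ncrit1].
have bound_psi' T1 : i \in T1 -> ~~ critical v T1 i -> 1 <= \sum_T share_others T ->
    psi' v i <= (2 ^ n.-1 - 1)%N%:R * \sum_T share_others T.
  move=> iT1 ncT1 others_ge1; apply: le_trans (psi'_le_of_noncritical T1 iT1 ncT1) _.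
  by rewrite ler_peMr // (le_trans ler01).
have [/existsP[T /andP[vT iT]]|/existsPn allI] := boolP [exists T, v T && (i \notin T)].
  apply: (bound_psi' (i |: T)); first by rewrite setU11.
    by rewrite /critical setU1K // (mono _ _ _ vT) ?subsetUr //= setU11 vT.
  exact: share_others_ge1_of_winning_notin vT iT.
have allI' T : v T -> i \in T by move=> vT; move: (allI T); rewrite vT negbK.
have vi := singleton_losing_of_not_dictator mono nd allI'.
apply: (bound_psi' [set i]); first by rewrite set11.
  by rewrite /critical vi.
exact: share_others_ge1_of_sole_critical allI' vi cT0 ncrit1.
Qed.

End SimpleGames.

Theorem theorem3 (n : nat) (v : {set 'I_n} -> bool) (i : 'I_n) :
  (2 <= n)%N -> simple_game v -> ~ dictator v i ->
  johnston v i <= ((2 ^ n.-1 - 1)%N)%:R / ((2 ^ n.-1)%N)%:R.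
Proof.
move=> n2 sg nd.
have pow_gt0 : (0 < 2 ^ n.-1)%N by rewrite expn_gt0.
have -> : (2 ^ n.-1)%N%:R = (2 ^ n.-1 - 1)%N%:R + 1 :> rat.
  by rewrite natrB // subrK.
rewrite /johnston (bigD1 i) //= sum_psi'_others.
apply: ratio_le_of_le_mul; rewrite ?ler0n ?psi'_le_share_others_scaled //.
- by apply: sumr_ge0 => *; rewrite invr_ge0 ler0n.
- by apply: sumr_ge0 => *; apply: share_others_ge0.
Qed.
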